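(* Let $n$ be a natural number, $X=[\underline{x},\overline{x}]$ an interval with rational endpoints and $x \in X$. Then $\arctan(x) \in [\arctan(X)]_n$ and $\exp(x) \in [\exp(X)]_n$; if moreover $\underline{x} \ge 0$ then $\sqrt{x} \in [\sqrt{X}]_n$; and if $\underline{x} > 0$ then $\ln(x) \in [\ln(X)]_n$. Moreover, $\pi \in [\pi]_n$.
   Context: An interval $[a,b]$ with rational endpoints is the set $\{z : a\le z\le b\}$. Bounding functions (all $n\in\mathbb{N}$): Square root ($x\ge0$): $\mathrm{UB}_{\mathrm{sqrt}}(x,0)=x+1$, $\mathrm{UB}_{\mathrm{sqrt}}(x,n+1)=\frac12(y+x/y)$ with $y=\mathrm{UB}_{\mathrm{sqrt}}(x,n)$, $\mathrm{LB}_{\mathrm{sqrt}}(x,n)=x/\mathrm{UB}_{\mathrm{sqrt}}(x,n)$. Arctangent: for $0<x\le1$, $\mathrm{LB}_{\mathrm{atan}}(x,n)=\sum_{i=0}^{2n+1}(-1)^i\frac{x^{2i+1}}{2i+1}$, $\mathrm{UB}_{\mathrm{atan}}(x,n)=\sum_{i=0}^{2n}(-1)^i\frac{x^{2i+1}}{2i+1}$; $\mathrm{LB}_{\pi}(n)=16\,\mathrm{LB}_{\mathrm{atan}}(1/5,n)-4\,\mathrm{UB}_{\mathrm{atan}}(1/239,n)$, $\mathrm{UB}_{\pi}(n)=16\,\mathrm{UB}_{\mathrm{atan}}(1/5,n)-4\,\mathrm{LB}_{\mathrm{atan}}(1/239,n)$; both atan bounds are $0$ at $x=0$; for $x>1$,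 $\mathrm{LB}_{\mathrm{atan}}(x,n)=\mathrm{LB}_\pi(n)/2-\mathrm{UB}_{\mathrm{atan}}(1/x,n)$, $\mathrm{UB}_{\mathrm{atan}}(x,n)=\mathrm{UB}_\pi(n)/2-\mathrm{LB}_{\mathrm{atan}}(1/x,n)$; for $x<0$, $\mathrm{LB}_{\mathrm{atan}}(x,n)=-\mathrm{UB}_{\mathrm{atan}}(-x,n)$, $\mathrm{UB}_{\mathrm{atan}}(x,n)=-\mathrm{LB}_{\mathrm{atan}}(-x,n)$. Exponential: for $-1\le x<0$, $\mathrm{LB}_{\exp}(x,n)=\sum_{i=0}^{2n+3}x^i/i!$, $\mathrm{UB}_{\exp}(x,n)=\sum_{i=0}^{2n+2}x^i/i!$; both equal $1$ at $x=0$; for $x<-1$ with $k=-\lfloor x\rfloor$, $\mathrm{LB}_{\exp}(x,n)=\mathrm{LB}_{\exp}(x/k,n)^k$, $\mathrm{UB}_{\exp}(x,n)=\mathrm{UB}_{\exp}(x/k,n)^k$; for $x>0$, $\mathrm{LB}_{\exp}(x,n)=1/\mathrm{UB}_{\exp}(-x,n)$, $\mathrm{UB}_{\exp}(x,n)=1/\mathrm{LB}_{\exp}(-x,n)$. Logarithm: for $1<x\le2$, $\mathrm{LB}_{\ln}(x,n)=\sum_{i=1}^{2n}(-1)^{i+1}\frac{(x-1)^i}{i}$, $\mathrm{UB}_{\ln}(x,n)=\sum_{i=1}^{2n+1}(-1)^{i+1}\frac{(x-1)^i}{i}$; both are $0$ at $x=1$; for $0<x<1$, $\mathrm{LB}_{\ln}(x,n)=-\mathrm{UB}_{\ln}(1/x,n)$,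 $\mathrm{UB}_{\ln}(x,n)=-\mathrm{LB}_{\ln}(1/x,n)$; for $x>2$, writing $x=2^m y$ with $m\in\mathbb{N}$, $1\le y<2$, $\mathrm{LB}_{\ln}(x,n)=m\,\mathrm{LB}_{\ln}(2,n)+\mathrm{LB}_{\ln}(y,n)$, $\mathrm{UB}_{\ln}(x,n)=m\,\mathrm{UB}_{\ln}(2,n)+\mathrm{UB}_{\ln}(y,n)$. Interval functions: $[\sqrt{X}]_n=[\mathrm{LB}_{\mathrm{sqrt}}(\underline{x},n),\mathrm{UB}_{\mathrm{sqrt}}(\overline{x},n)]$ (when $\underline{x}\ge0$); $[\arctan(X)]_n=[\mathrm{LB}_{\mathrm{atan}}(\underline{x},n),\mathrm{UB}_{\mathrm{atan}}(\overline{x},n)]$; $[\pi]_n=[\mathrm{LB}_\pi(n),\mathrm{UB}_\pi(n)]$; $[\exp(X)]_n=[\mathrm{LB}_{\exp}(\underline{x},n),\mathrm{UB}_{\exp}(\overline{x},n)]$; $[\ln(X)]_n=[\mathrm{LB}_{\ln}(\underline{x},n),\mathrm{UB}_{\ln}(\overline{x},n)]$ (when $\underline{x}>0$). *)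

From Stdlib Require Import QArith Qround Reals Qreals ZArith Arith.
Open Scope Q_scope.

Fixpoint qpow (x : Q) (k : nat) : Q :=
  match k with O => 1 | S k' => x * qpow x k' end.

Definition qfact (i : nat) : Q := inject_Z (Z.of_nat (fact i)).

Fixpoint qsum (f : nat -> Q) (N : nat) : Q :=
  match N with O => 0 | S N' => qsum f N' + f N' end.

Definition qsign (i : nat) : Q := if Nat.even i then 1 else -1.
Definition qnat (i : nat) : Q := inject_Z (Z.of_nat i).

Fixpoint UB_sqrt (x : Q) (n : nat) : Q :=
  match n with
  | O => x + 1
  | S n' => let y := UB_sqrt x n' in (1#2) * (y + x / y)
  end.
Definition LB_sqrt (x : Q) (n : nat) : Q := x / UB_sqrt x n.

Definition atan_series (x : Q) (N : nat) : Q :=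
  qsum (fun i => qsign i * qpow x (2*i+1) / qnat (2*i+1)) N.
(* case 0 < x <= 1 *)
Definition LB_atan01 (x : Q) (n : nat) : Q := atan_series x (2*n+2).
Definition UB_atan01 (x : Q) (n : nat) : Q := atan_series x (2*n+1).

Definition LB_pi (n : nat) : Q := 16 * LB_atan01 (1#5) n - 4 * UB_atan01 (1#239) n.
Definition UB_pi (n : nat) : Q := 16 * UB_atan01 (1#5) n - 4 * LB_atan01 (1#239) n.

Definition LB_atan_nn (x : Q) (n : nat) : Q :=
  if Qeq_bool x 0 then 0
  else if Qle_bool x 1 then LB_atan01 x n
  else LB_pi n / 2 - UB_atan01 (/ x) n.
Definition UB_atan_nn (x : Q) (n : nat) : Q :=
  if Qeq_bool x 0 then 0
  else if Qle_bool x 1 then UB_atan01 x n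
  else UB_pi n / 2 - LB_atan01 (/ x) n.

Definition LB_atan (x : Q) (n : nat) : Q :=
  if Qle_bool 0 x then LB_atan_nn x n else - UB_atan_nn (- x) n.
Definition UB_atan (x : Q) (n : nat) : Q :=
  if Qle_bool 0 x then UB_atan_nn x n else - LB_atan_nn (- x) n.

Definition exp_series (x : Q) (N : nat) : Q :=
  qsum (fun i => qpow x i / qfact i) N.
(* case -1 <= x < 0 *)
Definition LB_exp1 (x : Q) (n : nat) : Q := exp_series x (2*n+4).
Definition UB_exp1 (x : Q) (n : nat) : Q := exp_series x (2*n+3).

Definition LB_exp_np (x : Q) (n : nat) : Q :=
  if Qeq_bool x 0 then 1
  else if Qle_bool (-1) x then LB_exp1 x n
  else let k := Z.to_nat (- Qfloor x) in qpow (LB_exp1 (x / qnat k) n) k.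
Definition UB_exp_np (x : Q) (n : nat) : Q :=
  if Qeq_bool x 0 then 1
  else if Qle_bool (-1) x then UB_exp1 x n
  else let k := Z.to_nat (- Qfloor x) in qpow (UB_exp1 (x / qnat k) n) k.

Definition LB_exp (x : Q) (n : nat) : Q :=
  if Qle_bool x 0 then LB_exp_np x n else / UB_exp_np (- x) n.
Definition UB_exp (x : Q) (n : nat) : Q :=
  if Qle_bool x 0 then UB_exp_np x n else / LB_exp_np (- x) n.

Definition ln_series (x : Q) (N : nat) : Q :=
  qsum (fun j => qsign j * qpow (x - 1) (S j) / qnat (S j)) N.
(* case 1 <= x <= 2 (the series is 0 at x = 1) *)
Definition LB_ln12 (x : Q) (n : nat) : Q := ln_series x (2*n).
Definition UB_ln12 (x : Q) (n : nat) : Q := ln_series x (2*n+1).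

(* for x >= 1: m = floor(log2 x) = log2 (floor x), y = x / 2^m in [1,2) *)
Definition ln_exp2 (x : Q) : nat := Z.to_nat (Z.log2 (Qfloor x)).
Definition ln_mant (x : Q) : Q := x / qpow 2 (ln_exp2 x).

Definition LB_ln_ge1 (x : Q) (n : nat) : Q :=
  if Qle_bool x 2 then LB_ln12 x n
  else qnat (ln_exp2 x) * LB_ln12 2 n + LB_ln12 (ln_mant x) n.
Definition UB_ln_ge1 (x : Q) (n : nat) : Q :=
  if Qle_bool x 2 then UB_ln12 x n
  else qnat (ln_exp2 x) * UB_ln12 2 n + UB_ln12 (ln_mant x) n.

Definition LB_ln (x : Q) (n : nat) : Q :=
  if Qle_bool 1 x then LB_ln_ge1 x n else - UB_ln_ge1 (/ x) n.
Definition UB_ln (x : Q) (n : nat) : Q :=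
  if Qle_bool 1 x then UB_ln_ge1 x n else - LB_ln_ge1 (/ x) n.

Definition interval := (Q * Q)%type.
Definition in_interval (z : R) (I : interval) : Prop :=
  (Q2R (fst I) <= z <= Q2R (snd I))%R.

Definition I_sqrt (X : interval) (n : nat) : interval := (LB_sqrt (fst X) n, UB_sqrt (snd X) n).
Definition I_atan (X : interval) (n : nat) : interval := (LB_atan (fst X) n, UB_atan (snd X) n).
Definition I_pi (n : nat) : interval := (LB_pi n, UB_pi n).
Definition I_exp (X : interval) (n : nat) : interval := (LB_exp (fst X) n, UB_exp (snd X) n).
Definition I_ln (X : interval) (n : nat) : interval := (LB_ln (fst X) n, UB_ln (snd X) n).

(* Each bound is a partial sum of a Taylor series whose remainder alternates in sign:
   for [atan] and [ln (1 + t)] with [t >= 0], and for [exp] on nonpositive arguments,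
   [(-1)^N] times the remainder after [N] terms is nonnegative.  By the mean value
   theorem this reduces to the same sign for the derivative of the remainder, which is
   a geometric remainder [(-u)^N / (1 + u)] for [atan] and [ln], and the previous
   remainder for [exp].  Hence the even partial sums are lower bounds and the odd ones
   upper bounds.  The range reductions are [atan x = PI/2 - atan (1/x)], Machin's
   formula for [PI], [exp x = exp (x/k)^k], [ln (2^m y) = m ln 2 + ln y] and the
   symmetries in [-x] and [1/x]; they preserve the bounds because the even partial
   sums of the exponential series are positive on [[-1, 0]].  The Heron iterates stay
   above [sqrt x] by AM-GM.  Monotonicity of each function finally transports the
   bounds at the endpoints to the whole interval. *)

From Stdlib Require Import QArith Reals Qreals Qround Lra Lia Psatz ZArith.

Open Scope R_scope.

Lemma le_of_derive_nonneg (f f' : R -> R) a b : a <= b ->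
  (forall c, a <= c <= b -> derivable_pt_lim f c (f' c)) ->
  (forall c, a <= c <= b -> 0 <= f' c) -> f a <= f b.
Proof.
  intros Hab Hder Hpos. destruct (Req_dec a b) as [<- | Hne]; [lra |].
  destruct (MVT_cor2 f f' a b ltac:(lra) Hder) as [c [Hmvt Hc]].
  assert (0 <= f' c * (b - a)) by (apply Rmult_le_pos; [apply Hpos | ]; lra).
  lra.
Qed.

Lemma increasing_le (f : R -> R) a b : (a < b -> f a < f b) -> a <= b -> f a <= f b.
Proof.
  intros Hinc Hab. destruct (Req_dec a b) as [<- | Hne]; [lra |]. apply Rlt_le, Hinc; lra.
Qed.

Lemma derivable_pt_lim_monomial c m y :
  derivable_pt_lim (fun z => c * z ^ m) y (c * INR m * y ^ pred m).
Proof. rewrite Rmult_assoc. exact (derivable_pt_lim_scal _ c y _ (derivable_pt_lim_pow y m)). Qed.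

Fixpoint rsum (f : nat -> R) (N : nat) : R :=
  match N with O => 0 | S N' => rsum f N' + f N' end.

Lemma rsum_ext f g N : (forall i, f i = g i) -> rsum f N = rsum g N.
Proof. intros Hfg. induction N as [| N IH]; simpl; [| rewrite IH, Hfg]; reflexivity. Qed.

Lemma rsum_eq_0 f N : (forall i, f i = 0) -> rsum f N = 0.
Proof. intros Hf. induction N as [| N IH]; simpl; [| rewrite IH, Hf]; lra. Qed.

Lemma rsum_shift f N : rsum f (S N) = f O + rsum (fun i => f (S i)) N.
Proof.
  induction N as [| N IH]; [simpl; lra |].
  change (rsum f (S (S N))) with (rsum f (S N) + f (S N)). rewrite IH. simpl. lra.
Qed.

Lemma derivable_pt_lim_rsum (f f' : nat -> R -> R) N y :
  (forall i, derivable_pt_lim (f i) y (f' i y)) ->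
  derivable_pt_lim (fun z => rsum (fun i => f i z) N) y (rsum (fun i => f' i y) N).
Proof.
  intros Hf. induction N as [| N IH]; simpl.
  - apply derivable_pt_lim_const.
  - exact (derivable_pt_lim_plus _ _ y _ _ IH (Hf N)).
Qed.

Lemma alternating_geometric_remainder u N : 0 <= u ->
  0 <= (-1) ^ N * (/ (1 + u) - rsum (fun i => (- u) ^ i) N).
Proof.
  intros Hu.
  assert (Hrem : / (1 + u) - rsum (fun i => (- u) ^ i) N = (- u) ^ N / (1 + u)).
  { induction N as [| N IH]; simpl rsum; [simpl; field; lra |].
    replace (/ (1 + u) - (rsum (fun i => (- u) ^ i) N + (- u) ^ N))
      with ((/ (1 + u) - rsum (fun i => (- u) ^ i) N) - (- u) ^ N) by ring.
    rewrite IH. simpl. field. lra. }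
  rewrite Hrem. unfold Rdiv. rewrite <- Rmult_assoc, <- Rpow_mult_distr.
  replace (-1 * - u) with u by ring.
  apply Rmult_le_pos; [apply pow_le | apply Rlt_le, Rinv_0_lt_compat]; lra.
Qed.

Lemma alternating_lower_bound v (s : nat -> R) m :
  (forall N, 0 <= (-1) ^ N * (v - s N)) -> s (2 * m)%nat <= v.
Proof. intros Hs. specialize (Hs (2 * m)%nat). rewrite pow_1_even in Hs. lra. Qed.

Lemma alternating_upper_bound v (s : nat -> R) m :
  (forall N, 0 <= (-1) ^ N * (v - s N)) -> v <= s (2 * m + 1)%nat.
Proof.
  intros Hs. specialize (Hs (2 * m + 1)%nat).
  replace (2 * m + 1)%nat with (S (2 * m)) in * by lia. rewrite pow_1_odd in Hs. lra.
Qed.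

Definition atan_poly (y : R) (N : nat) : R :=
  rsum (fun i => (-1) ^ i / INR (2 * i + 1) * y ^ (2 * i + 1)) N.

Lemma atan_remainder_sign N y : 0 <= y -> 0 <= (-1) ^ N * (atan y - atan_poly y N).
Proof.
  intros Hy.
  assert (H0 : (-1) ^ N * (atan 0 - atan_poly 0 N) = 0).
  { unfold atan_poly. rewrite atan_0, rsum_eq_0; [ring |].
    intros i. rewrite pow_i by lia. ring. }
  rewrite <- H0. apply (le_of_derive_nonneg (fun z => (-1) ^ N * (atan z - atan_poly z N))
    (fun c => (-1) ^ N * (/ (1 + c ^ 2) - rsum (fun i => (- c ^ 2) ^ i) N))); [exact Hy | |].
  - intros c _.
    apply derivable_pt_lim_scal, derivable_pt_lim_minus; [apply derivable_pt_lim_atan |].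
    apply (derivable_pt_lim_rsum (fun i z => (-1) ^ i / INR (2 * i + 1) * z ^ (2 * i + 1))
      (fun i z => (- z ^ 2) ^ i)).
    intros i. assert (Hi : INR (2 * i + 1) <> 0) by (apply not_0_INR; lia).
    replace ((- c ^ 2) ^ i)
      with ((-1) ^ i / INR (2 * i + 1) * INR (2 * i + 1) * c ^ pred (2 * i + 1)).
    + apply derivable_pt_lim_monomial.
    + replace (pred (2 * i + 1)) with (2 * i)%nat by lia.
      rewrite pow_mult. replace (- c ^ 2) with (-1 * c ^ 2) by ring.
      rewrite Rpow_mult_distr. field. exact Hi.
  - intros c _. apply alternating_geometric_remainder, pow2_ge_0.
Qed.

Definition ln1p_poly (t : R) (N : nat) : R :=
  rsum (fun i => (-1) ^ i / INR (S i) * t ^ S i) N.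

Lemma derivable_pt_lim_ln1p t : -1 < t -> derivable_pt_lim (fun z => ln (1 + z)) t (/ (1 + t)).
Proof.
  intros Ht. replace (/ (1 + t)) with (/ (1 + t) * (0 + 1)) by ring.
  apply (derivable_pt_lim_comp (fun z => 1 + z) ln).
  - apply derivable_pt_lim_plus; [apply derivable_pt_lim_const | apply derivable_pt_lim_id].
  - apply derivable_pt_lim_ln. lra.
Qed.

Lemma ln1p_remainder_sign N t : 0 <= t -> 0 <= (-1) ^ N * (ln (1 + t) - ln1p_poly t N).
Proof.
  intros Ht.
  assert (H0 : (-1) ^ N * (ln (1 + 0) - ln1p_poly 0 N) = 0).
  { unfold ln1p_poly. rewrite Rplus_0_r, ln_1, rsum_eq_0; [ring |].
    intros i. rewrite pow_i by lia. ring. }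
  rewrite <- H0. apply (le_of_derive_nonneg (fun z => (-1) ^ N * (ln (1 + z) - ln1p_poly z N))
    (fun c => (-1) ^ N * (/ (1 + c) - rsum (fun i => (- c) ^ i) N))); [exact Ht | |].
  - intros c Hc. apply derivable_pt_lim_scal, derivable_pt_lim_minus;
      [apply derivable_pt_lim_ln1p; lra |].
    apply (derivable_pt_lim_rsum (fun i z => (-1) ^ i / INR (S i) * z ^ S i)
      (fun i z => (- z) ^ i)).
    intros i. assert (Hi : INR (S i) <> 0) by (apply not_0_INR; lia).
    replace ((- c) ^ i) with ((-1) ^ i / INR (S i) * INR (S i) * c ^ pred (S i)).
    + apply derivable_pt_lim_monomial.
    + simpl pred. replace (- c) with (-1 * c) by ring. rewrite Rpow_mult_distr. field. exact Hi.
  - intros c Hc. apply alternating_geometric_remainder. lra.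
Qed.

Definition exp_poly (y : R) (N : nat) : R := rsum (fun i => / INR (fact i) * y ^ i) N.

Lemma exp_poly_0 N : exp_poly 0 (S N) = 1.
Proof.
  unfold exp_poly. rewrite rsum_shift, rsum_eq_0; [simpl; field |].
  intros i. simpl. ring.
Qed.

Lemma derivable_pt_lim_exp_poly y N :
  derivable_pt_lim (fun z => exp_poly z (S N)) y (exp_poly y N).
Proof.
  replace (exp_poly y N) with
    (rsum (fun i => match i with O => 0 | S j => / INR (fact j) * y ^ j end) (S N)).
  - apply (derivable_pt_lim_rsum (fun i z => / INR (fact i) * z ^ i)
      (fun i z => match i with O => 0 | S j => / INR (fact j) * z ^ j end)).
    intros [| j].
    + replace 0 with (/ INR (fact 0) * INR 0 * y ^ pred 0) by (simpl; ring).
      apply derivable_pt_lim_monomial.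
    + replace (/ INR (fact j) * y ^ j) with (/ INR (fact (S j)) * INR (S j) * y ^ pred (S j)).
      * apply derivable_pt_lim_monomial.
      * assert (INR (fact j) <> 0) by apply INR_fact_neq_0.
        assert (INR (S j) <> 0) by (apply not_0_INR; lia).
        simpl pred. change (fact (S j)) with (S j * fact j)%nat. rewrite mult_INR. field. auto.
  - rewrite rsum_shift. unfold exp_poly. ring.
Qed.

Lemma exp_remainder_sign N y : y <= 0 -> 0 <= (-1) ^ N * (exp y - exp_poly y N).
Proof.
  revert y. induction N as [| N IH]; intros y Hy.
  - unfold exp_poly. simpl. pose proof (exp_pos y). lra.
  - enough ((-1) ^ N * (exp y - exp_poly y (S N)) <= (-1) ^ N * (exp 0 - exp_poly 0 (S N))).
    { rewrite exp_0, exp_poly_0 in H. simpl. lra. }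
    apply (le_of_derive_nonneg (fun z => (-1) ^ N * (exp z - exp_poly z (S N)))
      (fun z => (-1) ^ N * (exp z - exp_poly z N))); [exact Hy | |].
    + intros c _. apply derivable_pt_lim_scal, derivable_pt_lim_minus;
        [apply derivable_pt_lim_exp | apply derivable_pt_lim_exp_poly].
    + intros c Hc. apply IH. lra.
Qed.

Lemma exp_term_pair_nonneg k y : -1 <= y -> 0 <= y ^ k ->
  0 <= / INR (fact k) * y ^ k + / INR (fact (S k)) * y ^ S k.
Proof.
  intros Hy Hk. change (fact (S k)) with (S k * fact k)%nat. rewrite mult_INR.
  assert (HF : 0 < INR (fact k)) by apply INR_fact_lt_0.
  assert (HS : 1 <= INR (S k)) by (apply (le_INR 1); lia).
  change (y ^ S k) with (y * y ^ k).
  replace (/ INR (fact k) * y ^ k + / (INR (S k) * INR (fact k)) * (y * y ^ k))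
    with (y ^ k / INR (fact k) * ((INR (S k) + y) / INR (S k))) by (field; lra).
  apply Rmult_le_pos; apply Rmult_le_pos; try apply Rlt_le, Rinv_0_lt_compat; lra.
Qed.

Lemma exp_poly_even_pos m y : -1 <= y <= 0 -> 0 < exp_poly y (2 * m + 4).
Proof.
  intros Hy. induction m as [| m IH].
  - unfold exp_poly. simpl. nra.
  - replace (2 * S m + 4)%nat with (S (S (2 * (m + 2)))) by lia.
    replace (2 * m + 4)%nat with (2 * (m + 2))%nat in IH by lia.
    pose proof (exp_term_pair_nonneg (2 * (m + 2)) y ltac:(lra)
      ltac:(rewrite pow_mult; apply pow_le, pow2_ge_0)).
    unfold exp_poly in *. change (rsum ?f (S (S ?k))) with (rsum f k + f k + f (S k)).
    cbv beta. lra.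
Qed.

Lemma Q2R_inject_Z z : Q2R (inject_Z z) = IZR z.
Proof. unfold Q2R. simpl. lra. Qed.

Lemma Q2R_0 : Q2R 0 = 0.
Proof. apply Q2R_inject_Z. Qed.

Lemma Q2R_1 : Q2R 1 = 1.
Proof. apply Q2R_inject_Z. Qed.

Lemma Q2R_qnat i : Q2R (qnat i) = INR i.
Proof. unfold qnat. rewrite Q2R_inject_Z, INR_IZR_INZ. reflexivity. Qed.

Lemma Q2R_qfact i : Q2R (qfact i) = INR (fact i).
Proof. unfold qfact. rewrite Q2R_inject_Z, INR_IZR_INZ. reflexivity. Qed.

Lemma Q2R_qpow x k : Q2R (qpow x k) = Q2R x ^ k.
Proof. induction k as [| k IH]; simpl; [apply Q2R_1 | rewrite Q2R_mult, IH; reflexivity]. Qed.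

Lemma Q2R_qsign i : Q2R (qsign i) = (-1) ^ i.
Proof.
  unfold qsign. destruct (Nat.even i) eqn:E.
  - apply Nat.even_spec in E as [k ->]. rewrite pow_1_even. apply Q2R_1.
  - assert (Nat.odd i = true) as [k ->]%Nat.odd_spec by (rewrite <- Nat.negb_even, E; reflexivity).
    replace (2 * k + 1)%nat with (S (2 * k)) by lia. rewrite pow_1_odd.
    unfold Q2R. simpl. lra.
Qed.

Lemma Q2R_qsum f N : Q2R (qsum f N) = rsum (fun i => Q2R (f i)) N.
Proof. induction N as [| N IH]; simpl; [apply Q2R_0 | rewrite Q2R_plus, IH; reflexivity]. Qed.

Lemma Q2R_neq_0 q : Q2R q <> 0 -> ~ (q == 0)%Q.
Proof. intros Hq E. apply Hq. rewrite (Qeq_eqR _ _ E). apply Q2R_0. Qed.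

Lemma Q2R_div_R x y : Q2R y <> 0 -> Q2R (x / y) = Q2R x / Q2R y.
Proof. intros Hy. apply Q2R_div, Q2R_neq_0, Hy. Qed.

Lemma Q2R_inv_R x : Q2R x <> 0 -> Q2R (/ x) = / Q2R x.
Proof. intros Hx. apply Q2R_inv, Q2R_neq_0, Hx. Qed.

Lemma Qle_bool_cases x y :
  (Qle_bool x y = true /\ Q2R x <= Q2R y) \/ (Qle_bool x y = false /\ Q2R y < Q2R x).
Proof.
  destruct (Qle_bool x y) eqn:E; [left | right]; split; try reflexivity.
  - apply Qle_Rle, Qle_bool_iff, E.
  - apply Qlt_Rlt, Qnot_le_lt. rewrite <- Qle_bool_iff, E. discriminate.
Qed.

Lemma Qeq_bool_cases x y : (Qeq_bool x y = true /\ Q2R x = Q2R y) \/ Qeq_bool x y = false.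
Proof.
  destruct (Qeq_bool x y) eqn:E; [left | right]; [split | ]; try reflexivity.
  apply Qeq_eqR, Qeq_bool_iff, E.
Qed.

Lemma Q2R_atan_series x N : Q2R (atan_series x N) = atan_poly (Q2R x) N.
Proof.
  unfold atan_series. rewrite Q2R_qsum. apply rsum_ext. intros i.
  assert (Hi : INR (2 * i + 1) <> 0) by (apply not_0_INR; lia).
  rewrite Q2R_div_R, Q2R_mult, Q2R_qsign, Q2R_qpow, Q2R_qnat; [field; exact Hi |].
  rewrite Q2R_qnat. exact Hi.
Qed.

Lemma Q2R_ln_series x N : Q2R (ln_series x N) = ln1p_poly (Q2R x - 1) N.
Proof.
  unfold ln_series. rewrite Q2R_qsum. apply rsum_ext. intros i.
  assert (Hi : INR (S i) <> 0) by (apply not_0_INR; lia).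
  rewrite Q2R_div_R, Q2R_mult, Q2R_qsign, Q2R_qpow, Q2R_qnat, Q2R_minus, Q2R_1;
    [field; exact Hi |].
  rewrite Q2R_qnat. exact Hi.
Qed.

Lemma Q2R_exp_series x N : Q2R (exp_series x N) = exp_poly (Q2R x) N.
Proof.
  unfold exp_series. rewrite Q2R_qsum. apply rsum_ext. intros i.
  pose proof (INR_fact_neq_0 i) as Hi.
  rewrite Q2R_div_R, Q2R_qpow, Q2R_qfact; [field; exact Hi |].
  rewrite Q2R_qfact. exact Hi.
Qed.

Lemma atan01_enclosure q n : 0 <= Q2R q ->
  Q2R (LB_atan01 q n) <= atan (Q2R q) <= Q2R (UB_atan01 q n).
Proof.
  intros Hq. unfold LB_atan01, UB_atan01. rewrite !Q2R_atan_series.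
  replace (2 * n + 2)%nat with (2 * (n + 1))%nat by lia.
  split; [apply alternating_lower_bound | apply alternating_upper_bound];
    intros N; apply atan_remainder_sign, Hq.
Qed.

Lemma pi_enclosure n : Q2R (LB_pi n) <= PI <= Q2R (UB_pi n).
Proof.
  assert (H5 : Q2R (1 # 5) = / 5) by (unfold Q2R; simpl; field).
  assert (H239 : Q2R (1 # 239) = / 239) by (unfold Q2R; simpl; field).
  pose proof (atan01_enclosure (1 # 5) n ltac:(rewrite H5; lra)).
  pose proof (atan01_enclosure (1 # 239) n ltac:(rewrite H239; lra)).
  pose proof Machin_4_5_239.
  unfold LB_pi, UB_pi. rewrite !Q2R_minus, !Q2R_mult, H5, H239 in *.
  replace (Q2R 16) with 16 by (unfold Q2R; simpl; field).
  replace (Q2R 4) with 4 by (unfold Q2R; simpl; field).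
  lra.
Qed.

Lemma atan_nn_enclosure q n : 0 <= Q2R q ->
  Q2R (LB_atan_nn q n) <= atan (Q2R q) <= Q2R (UB_atan_nn q n).
Proof.
  intros Hq. unfold LB_atan_nn, UB_atan_nn.
  destruct (Qeq_bool_cases q 0) as [[-> Hq0] | ->].
  { rewrite Hq0, Q2R_0, atan_0. lra. }
  destruct (Qle_bool_cases q 1) as [[-> _] | [-> Hq1]]; [exact (atan01_enclosure q n Hq) |].
  rewrite Q2R_1 in Hq1.
  assert (H2 : Q2R 2 = 2) by apply Q2R_inject_Z.
  assert (Hinv : Q2R (/ q) = / Q2R q) by (apply Q2R_inv_R; lra).
  pose proof (atan01_enclosure (/ q) n ltac:(rewrite Hinv; apply Rlt_le, Rinv_0_lt_compat; lra)).
  pose proof (pi_enclosure n).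
  pose proof (atan_inv (Q2R q) ltac:(lra)).
  rewrite !Q2R_minus, !Q2R_div_R, H2, Hinv in * by (rewrite H2; lra).
  lra.
Qed.

Lemma atan_enclosure q n : Q2R (LB_atan q n) <= atan (Q2R q) <= Q2R (UB_atan q n).
Proof.
  unfold LB_atan, UB_atan.
  destruct (Qle_bool_cases 0 q) as [[-> Hq] | [-> Hq]]; rewrite Q2R_0 in Hq;
    [exact (atan_nn_enclosure q n Hq) |].
  pose proof (atan_nn_enclosure (- q) n ltac:(rewrite Q2R_opp; lra)) as H.
  rewrite Q2R_opp, atan_opp in H. rewrite !Q2R_opp. lra.
Qed.

Lemma exp1_enclosure q n : Q2R q <= 0 ->
  Q2R (LB_exp1 q n) <= exp (Q2R q) <= Q2R (UB_exp1 q n).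
Proof.
  intros Hq. unfold LB_exp1, UB_exp1. rewrite !Q2R_exp_series.
  replace (2 * n + 4)%nat with (2 * (n + 2))%nat by lia.
  replace (2 * n + 3)%nat with (2 * (n + 1) + 1)%nat by lia.
  split; [apply alternating_lower_bound | apply alternating_upper_bound];
    intros N; apply exp_remainder_sign, Hq.
Qed.

Lemma LB_exp1_pos q n : -1 <= Q2R q <= 0 -> 0 < Q2R (LB_exp1 q n).
Proof. intros Hq. unfold LB_exp1. rewrite Q2R_exp_series. apply exp_poly_even_pos, Hq. Qed.

Lemma exp_INR_mult k y : exp (INR k * y) = exp y ^ k.
Proof.
  induction k as [| k IH]; [simpl; rewrite Rmult_0_l; apply exp_0 |].
  rewrite S_INR, Rmult_plus_distr_r, Rmult_1_l, exp_plus, IH. simpl. ring.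
Qed.

Lemma Qfloor_scale_to_unit q : Q2R q < -1 ->
  0 < INR (Z.to_nat (- Qfloor q)) /\ -1 <= Q2R q / INR (Z.to_nat (- Qfloor q)) <= 0.
Proof.
  intros Hq.
  assert (Hfl : IZR (Qfloor q) <= Q2R q) by (rewrite <- Q2R_inject_Z; apply Qle_Rle, Qfloor_le).
  assert (Hneg : (Qfloor q < -1)%Z) by (apply lt_IZR; lra).
  assert (Hk : INR (Z.to_nat (- Qfloor q)) = - IZR (Qfloor q))
    by (rewrite INR_IZR_INZ, Z2Nat.id by lia; apply opp_IZR).
  rewrite Hk. apply IZR_lt in Hneg.
  split; [lra | split].
  - apply (Rmult_le_reg_r (- IZR (Qfloor q))); [lra |].
    unfold Rdiv. rewrite Rmult_assoc, Rinv_l by lra. lra.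
  - assert (0 < / - IZR (Qfloor q)) by (apply Rinv_0_lt_compat; lra).
    unfold Rdiv. nra.
Qed.

Lemma exp_np_enclosure q n : Q2R q <= 0 ->
  0 < Q2R (LB_exp_np q n) /\ Q2R (LB_exp_np q n) <= exp (Q2R q) <= Q2R (UB_exp_np q n).
Proof.
  intros Hq. unfold LB_exp_np, UB_exp_np.
  destruct (Qeq_bool_cases q 0) as [[-> Hq0] | ->].
  { rewrite Hq0, Q2R_0, Q2R_1, exp_0. lra. }
  destruct (Qle_bool_cases (-1) q) as [[-> Hq1] | [-> Hq1]];
    change (-1)%Q with (inject_Z (-1)) in Hq1; rewrite Q2R_inject_Z in Hq1.
  { split; [apply LB_exp1_pos; lra | apply exp1_enclosure, Hq]. }
  set (k := Z.to_nat (- Qfloor q)).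
  destruct (Qfloor_scale_to_unit q Hq1) as [Hk Hqk]. fold k in Hk, Hqk.
  assert (Hdiv : Q2R (q / qnat k) = Q2R q / INR k)
    by (rewrite Q2R_div_R; rewrite Q2R_qnat; lra).
  assert (Hexp : exp (Q2R q) = exp (Q2R q / INR k) ^ k)
    by (rewrite <- exp_INR_mult; f_equal; field; lra).
  pose proof (LB_exp1_pos (q / qnat k) n ltac:(rewrite Hdiv; exact Hqk)).
  pose proof (exp1_enclosure (q / qnat k) n ltac:(rewrite Hdiv; lra)).
  rewrite !Q2R_qpow, Hexp. rewrite Hdiv in *.
  split; [apply pow_lt; lra | split; apply pow_incr; lra].
Qed.

Lemma exp_enclosure q n : Q2R (LB_exp q n) <= exp (Q2R q) <= Q2R (UB_exp q n).
Proof.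
  unfold LB_exp, UB_exp.
  destruct (Qle_bool_cases q 0) as [[-> Hq] | [-> Hq]]; rewrite Q2R_0 in Hq.
  { apply exp_np_enclosure, Hq. }
  destruct (exp_np_enclosure (- q) n ltac:(rewrite Q2R_opp; lra)) as [Hpos [Hlo Hhi]].
  rewrite Q2R_opp, exp_Ropp in Hlo, Hhi.
  pose proof (exp_pos (Q2R q)).
  rewrite !Q2R_inv_R by lra.
  replace (exp (Q2R q)) with (/ / exp (Q2R q)) by (apply Rinv_inv).
  split; apply Rinv_le_contravar; lra.
Qed.

Lemma ln12_enclosure q n : 1 <= Q2R q ->
  Q2R (LB_ln12 q n) <= ln (Q2R q) <= Q2R (UB_ln12 q n).
Proof.
  intros Hq. unfold LB_ln12, UB_ln12. rewrite !Q2R_ln_series.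
  assert (Hsign : forall N, 0 <= (-1) ^ N * (ln (Q2R q) - ln1p_poly (Q2R q - 1) N)).
  { intros N. replace (ln (Q2R q)) with (ln (1 + (Q2R q - 1))) by (f_equal; ring).
    apply ln1p_remainder_sign. lra. }
  split; [apply alternating_lower_bound | apply alternating_upper_bound]; exact Hsign.
Qed.

Lemma ln_mant_spec q : 1 <= Q2R q ->
  1 <= Q2R (ln_mant q) /\ Q2R q = 2 ^ ln_exp2 q * Q2R (ln_mant q).
Proof.
  intros Hq. unfold ln_mant, ln_exp2.
  set (f := Qfloor q). set (m := Z.to_nat (Z.log2 f)).
  assert (Hfl : IZR f <= Q2R q) by (rewrite <- Q2R_inject_Z; apply Qle_Rle, Qfloor_le).
  assert (Hfl1 : Q2R q < IZR f + 1)
    by (rewrite <- plus_IZR, <- Q2R_inject_Z; apply Qlt_Rlt, Qlt_floor).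
  assert (Hf : (0 < f)%Z) by (apply lt_IZR; lra).
  assert (H2m : 2 ^ m <= Q2R q).
  { apply Rle_trans with (IZR f); [| exact Hfl].
    replace 2 with (IZR 2) by reflexivity. rewrite pow_IZR.
    unfold m. rewrite Z2Nat.id by apply Z.log2_nonneg.
    apply IZR_le, Z.log2_spec, Hf. }
  assert (Hpos : 0 < 2 ^ m) by (apply pow_lt; lra).
  assert (Hpow : Q2R (qpow 2 m) = 2 ^ m) by (rewrite Q2R_qpow; f_equal; apply Q2R_inject_Z).
  rewrite Q2R_div_R, Hpow by lra. split.
  - apply (Rmult_le_reg_r (2 ^ m)); [exact Hpos |].
    unfold Rdiv. rewrite Rmult_assoc, Rinv_l by lra. lra.
  - field. lra.
Qed.

Lemma ln_ge1_enclosure q n : 1 <= Q2R q ->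
  Q2R (LB_ln_ge1 q n) <= ln (Q2R q) <= Q2R (UB_ln_ge1 q n).
Proof.
  intros Hq. unfold LB_ln_ge1, UB_ln_ge1.
  destruct (Qle_bool_cases q 2) as [[-> _] | [-> _]]; [exact (ln12_enclosure q n Hq) |].
  destruct (ln_mant_spec q Hq) as [Hmant Hsplit].
  assert (Hln : ln (Q2R q) = INR (ln_exp2 q) * ln 2 + ln (Q2R (ln_mant q)))
    by (rewrite Hsplit, ln_mult, ln_pow by (try apply pow_lt; lra); reflexivity).
  assert (H2 : Q2R 2 = 2) by apply Q2R_inject_Z.
  pose proof (ln12_enclosure 2 n ltac:(rewrite H2; lra)) as Hln2. rewrite H2 in Hln2.
  pose proof (ln12_enclosure _ n Hmant).
  pose proof (pos_INR (ln_exp2 q)).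
  rewrite !Q2R_plus, !Q2R_mult, !Q2R_qnat, Hln.
  split; apply Rplus_le_compat; try tauto; apply Rmult_le_compat_l; tauto.
Qed.

Lemma ln_enclosure q n : 0 < Q2R q -> Q2R (LB_ln q n) <= ln (Q2R q) <= Q2R (UB_ln q n).
Proof.
  intros Hq. unfold LB_ln, UB_ln.
  destruct (Qle_bool_cases 1 q) as [[-> Hq1] | [-> Hq1]]; rewrite Q2R_1 in Hq1.
  { exact (ln_ge1_enclosure q n Hq1). }
  assert (Hinv : Q2R (/ q) = / Q2R q) by (apply Q2R_inv_R; lra).
  assert (Hinv1 : 1 <= Q2R (/ q)).
  { rewrite Hinv. apply (Rmult_le_reg_r (Q2R q)); [exact Hq |]. rewrite Rinv_l; lra. }
  pose proof (ln_ge1_enclosure _ n Hinv1) as H. rewrite Hinv, ln_Rinv in H by exact Hq.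
  rewrite !Q2R_opp. lra.
Qed.

Lemma UB_sqrt_spec x n : 0 <= Q2R x ->
  0 < Q2R (UB_sqrt x n) /\ Q2R x <= Q2R (UB_sqrt x n) ^ 2.
Proof.
  intros Hx. induction n as [| n [Hpos Hsq]]; simpl UB_sqrt.
  - rewrite Q2R_plus, Q2R_1. split; nra.
  - assert (Hhalf : Q2R (1 # 2) = / 2) by (unfold Q2R; simpl; field).
    rewrite Q2R_mult, Q2R_plus, Q2R_div_R, Hhalf by lra.
    set (y := Q2R (UB_sqrt x n)) in *.
    assert (0 <= Q2R x / y) by (apply Rmult_le_pos; [| apply Rlt_le, Rinv_0_lt_compat]; lra).
    split; [lra |].
    replace ((/ 2 * (y + Q2R x / y)) ^ 2) with (Q2R x + (/ 2 * (y - Q2R x / y)) ^ 2)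
      by (field; lra).
    pose proof (pow2_ge_0 (/ 2 * (y - Q2R x / y))). lra.
Qed.

Lemma sqrt_enclosure q n : 0 <= Q2R q ->
  Q2R (LB_sqrt q n) <= sqrt (Q2R q) <= Q2R (UB_sqrt q n).
Proof.
  intros Hq. destruct (UB_sqrt_spec q n Hq) as [Hpos Hsq].
  assert (Hub : sqrt (Q2R q) <= Q2R (UB_sqrt q n)).
  { rewrite <- (sqrt_pow2 (Q2R (UB_sqrt q n))) by lra. apply sqrt_le_1_alt, Hsq. }
  split; [| exact Hub].
  unfold LB_sqrt. rewrite Q2R_div_R by lra.
  pose proof (sqrt_sqrt _ Hq). pose proof (sqrt_pos (Q2R q)).
  apply (Rmult_le_reg_r (Q2R (UB_sqrt q n))); [exact Hpos |].
  unfold Rdiv. rewrite Rmult_assoc, Rinv_l by lra. nra.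
Qed.

Theorem proposition12 (n : nat) (X : interval) (x : R) :
  in_interval x X ->
  in_interval (atan x) (I_atan X n) /\
  in_interval (exp x) (I_exp X n) /\
  ((0 <= fst X)%Q -> in_interval (sqrt x) (I_sqrt X n)) /\
  ((0 < fst X)%Q -> in_interval (ln x) (I_ln X n)) /\
  in_interval PI (I_pi n).
Proof.
  destruct X as [lo hi]. unfold in_interval, I_atan, I_exp, I_sqrt, I_ln, I_pi. simpl.
  intros [Hlo Hhi]. split; [| split; [| split; [| split]]].
  - pose proof (atan_enclosure lo n). pose proof (atan_enclosure hi n).
    pose proof (increasing_le atan _ _ (atan_increasing _ _) Hlo).
    pose proof (increasing_le atan _ _ (atan_increasing _ _) Hhi). lra.
  - pose proof (exp_enclosure lo n). pose proof (exp_enclosure hi n).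
    pose proof (increasing_le exp _ _ (exp_increasing _ _) Hlo).
    pose proof (increasing_le exp _ _ (exp_increasing _ _) Hhi). lra.
  - intros H0. apply Qle_Rle in H0. rewrite Q2R_0 in H0.
    pose proof (sqrt_enclosure lo n H0). pose proof (sqrt_enclosure hi n ltac:(lra)).
    pose proof (sqrt_le_1_alt _ _ Hlo). pose proof (sqrt_le_1_alt _ _ Hhi). lra.
  - intros H0. apply Qlt_Rlt in H0. rewrite Q2R_0 in H0.
    pose proof (ln_enclosure lo n H0). pose proof (ln_enclosure hi n ltac:(lra)).
    pose proof (increasing_le ln _ _ (ln_increasing _ _ H0) Hlo).
    pose proof (increasing_le ln _ _ (ln_increasing x _ ltac:(lra)) Hhi). lra.
  - apply pi_enclosure.
Qed.
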